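(* Let $q\in(1,+\infty)$ and define $f:[1,+\infty)\to\mathbb R$ by $f(1)=-1$ and, for $y>1$, $$f(y)=-q\,\frac{y^{\frac q{q-1}}}{y^{\frac q{q-1}}-(y-1)^{\frac q{q-1}}}+(q-1)y.$$ Then: \begin{enumerate} \item $f$ is continuous and increasing, smooth on $(1,+\infty)$, and is a bijection from $[1,+\infty)$ onto $[-1,-1/2)$ with an increasing and continuous inverse. \item For $y>1$, $$f'(y)=\frac{(q-1)^2\left(y^{\frac q{q-1}}-(y-1)^{\frac q{q-1}}\right)^2-q^2y^{\frac1{q-1}}(y-1)^{\frac1{q-1}}}{(q-1)\left(y^{\frac q{q-1}}-(y-1)^{\frac q{q-1}}\right)^2},$$ and the extension of $f'$ by the value $q-1$ at $y=1$ is continuous on $[1,+\infty)$. \end{enumerate} *)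

From Stdlib Require Import Reals Lra.
From Coquelicot Require Import Coquelicot.
Open Scope R_scope.

(* The function f of the lemma, for a parameter q > 1.
   Real powers are Rpower (= exp (a * ln x)), applied only to positive bases.
   f 1 = -1; values for y < 1 are irrelevant (domain is [1,+oo)). *)
Definition fq (q y : R) : R :=
  if Rle_dec y 1 then -1
  else - q * (Rpower y (q / (q - 1)) /
               (Rpower y (q / (q - 1)) - Rpower (y - 1) (q / (q - 1))))
       + (q - 1) * y.

Definition fq_deriv_formula (q y : R) : R :=
  ((q - 1) ^ 2 * (Rpower y (q / (q - 1)) - Rpower (y - 1) (q / (q - 1))) ^ 2
     - q ^ 2 * Rpower y (1 / (q - 1)) * Rpower (y - 1) (1 / (q - 1)))
  / ((q - 1) * (Rpower y (q / (q - 1)) - Rpower (y - 1) (q / (q - 1))) ^ 2).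

Definition fq_deriv_ext (q y : R) : R :=
  if Rlt_dec 1 y then Derive (fq q) y else q - 1.

From Stdlib Require Import Reals Lra Lia ClassicalEpsilon.
From Coquelicot Require Import Coquelicot.
Open Scope R_scope.

(* Let p = q/(q-1) > 1 be the conjugate exponent.  On (1, +oo), f is built from smooth
   functions and its derivative is a direct computation; continuity at 1 only needs the
   power function extended by 0 at the origin.  The sign of f' is that of
   (q-1)^2 (y^p - (y-1)^p)^2 - q^2 (y(y-1))^(p-1), i.e. of
   u^p - v^p - p (u - v) (uv)^((p-1)/2) for u = y, v = y - 1; writing u = e^(m+t),
   v = e^(m-t), this is 2 e^(pm) (sinh (p t) - p sinh t) > 0, so f is increasing.
   With s = 1/y, f(y) + 1/2 = K(s) / (s E(s)) where E(s) = 1 - (1-s)^p > s and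
   K(s) = (q - 1 + s/2) E(s) - q s satisfies K(0) = K'(0) = K''(0) = 0, so K(s) = o(s^2)
   and f tends to -1/2.  A continuous increasing function on [1, +oo) tending to -1/2 is
   a bijection onto [f 1, -1/2), and its inverse is increasing with an interval as image,
   hence continuous. *)

Section DeriveUpto.

Variable U : R -> Prop.
Hypothesis U_open : open U.

(* A finite order [m] is what lets the product and chain rules go through by induction. *)
Definition ex_derive_upto (m : nat) (f : R -> R) : Prop :=
  forall k, (k <= m)%nat -> forall y, U y -> ex_derive_n f k y.

Lemma ex_derive_upto_0 f : ex_derive_upto 0 f.
Proof. intros k Hk y _. destruct k; [exact I | lia]. Qed.

Lemma ex_derive_upto_pred m f : ex_derive_upto (S m) f -> ex_derive_upto m f.
Proof. intros H k Hk. apply H. lia. Qed.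

Lemma is_derive_of_upto m f :
  ex_derive_upto (S m) f -> forall y, U y -> is_derive f y (Derive f y).
Proof. intros H y Hy. apply Derive_correct, (H 1%nat); [lia | exact Hy]. Qed.

Lemma locally_of_open (P : R -> Prop) y :
  U y -> (forall t, U t -> P t) -> locally y P.
Proof. intros Hy HP. exact (filter_imp U P HP (U_open y Hy)). Qed.

Lemma Derive_n_S_of_is_derive f f' :
  (forall y, U y -> is_derive f y (f' y)) ->
  forall i y, U y -> Derive_n f (S i) y = Derive_n f' i y.
Proof.
  intros Hf i. induction i as [|i IH]; intros y Hy.
  - apply is_derive_unique, Hf, Hy.
  - apply Derive_ext_loc, (locally_of_open _ y Hy), IH.
Qed.

Section WithDerivative.

Variables f f' : R -> R.
Hypothesis f_derive : forall y, U y -> is_derive f y (f' y).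

Lemma ex_derive_upto_S m : ex_derive_upto m f' -> ex_derive_upto (S m) f.
Proof.
  intros Hf' [|[|k]] Hk y Hy.
  - exact I.
  - exists (f' y). apply f_derive, Hy.
  - apply ex_derive_ext_loc with (Derive_n f' k).
    + apply (locally_of_open _ y Hy). intros t Ht.
      symmetry. apply (Derive_n_S_of_is_derive f f' f_derive k t Ht).
    + apply (Hf' (S k)); [lia | exact Hy].
Qed.

Lemma ex_derive_upto_deriv m : ex_derive_upto (S m) f -> ex_derive_upto m f'.
Proof.
  intros Hf [|k] Hk y Hy.
  - exact I.
  - apply ex_derive_ext_loc with (Derive_n f (S k)).
    + apply (locally_of_open _ y Hy). intros t Ht.
      apply (Derive_n_S_of_is_derive f f' f_derive k t Ht).
    + apply (Hf (S (S k))); [lia | exact Hy].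
Qed.

End WithDerivative.

Lemma ex_derive_upto_Derive m f :
  ex_derive_upto (S m) f -> ex_derive_upto m (Derive f).
Proof. intros Hf. exact (ex_derive_upto_deriv f _ (is_derive_of_upto m f Hf) m Hf). Qed.

Lemma ex_derive_upto_ext m f g :
  (forall y, U y -> f y = g y) -> ex_derive_upto m f -> ex_derive_upto m g.
Proof.
  intros Hfg Hf k Hk y Hy.
  apply ex_derive_n_ext_loc with f; [apply (locally_of_open _ y Hy), Hfg | apply Hf; auto].
Qed.

Lemma ex_derive_upto_const m c : ex_derive_upto m (fun _ => c).
Proof.
  destruct m; [apply ex_derive_upto_0 |].
  apply ex_derive_upto_S with (fun _ => 0); [intros; apply (is_derive_const c) |].
  intros k _ y _. apply ex_derive_n_const.
Qed.

Lemma ex_derive_upto_id m : ex_derive_upto m (fun y => y).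
Proof.
  destruct m; [apply ex_derive_upto_0 |].
  apply ex_derive_upto_S with (fun _ => 1); [intros y _; apply (is_derive_id y) |].
  apply ex_derive_upto_const.
Qed.

Lemma ex_derive_upto_plus m f g :
  ex_derive_upto m f -> ex_derive_upto m g -> ex_derive_upto m (fun y => f y + g y).
Proof.
  revert f g. induction m as [|m IH]; intros f g Hf Hg; [apply ex_derive_upto_0 |].
  apply ex_derive_upto_S with (fun y => Derive f y + Derive g y).
  - intros y Hy. apply (is_derive_plus f g); eapply is_derive_of_upto; eauto.
  - apply IH; apply ex_derive_upto_Derive; assumption.
Qed.

Lemma ex_derive_upto_mult m f g :
  ex_derive_upto m f -> ex_derive_upto m g -> ex_derive_upto m (fun y => f y * g y).
Proof.
  revert f g. induction m as [|m IH]; intros f g Hf Hg; [apply ex_derive_upto_0 |].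
  apply ex_derive_upto_S with (fun y => Derive f y * g y + f y * Derive g y).
  - intros y Hy. apply (is_derive_mult f g); try (eapply is_derive_of_upto; eauto).
    intros; apply Rmult_comm.
  - apply ex_derive_upto_plus; apply IH;
      auto using ex_derive_upto_pred, ex_derive_upto_Derive.
Qed.

Lemma ex_derive_upto_opp m f :
  ex_derive_upto m f -> ex_derive_upto m (fun y => - f y).
Proof.
  intros Hf. apply ex_derive_upto_ext with (fun y => -1 * f y); [intros; ring |].
  apply ex_derive_upto_mult; [apply ex_derive_upto_const | exact Hf].
Qed.

Lemma ex_derive_upto_minus m f g :
  ex_derive_upto m f -> ex_derive_upto m g -> ex_derive_upto m (fun y => f y - g y).
Proof. intros Hf Hg. apply ex_derive_upto_plus; [exact Hf | apply ex_derive_upto_opp, Hg]. Qed.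

End DeriveUpto.

Lemma ex_derive_upto_comp (U V : R -> Prop) m phi g :
  open U -> open V -> (forall y, U y -> V (g y)) ->
  ex_derive_upto V m phi -> ex_derive_upto U m g ->
  ex_derive_upto U m (fun y => phi (g y)).
Proof.
  intros HU HV HgUV. revert phi g HgUV.
  induction m as [|m IH]; intros phi g HgUV Hphi Hg; [apply ex_derive_upto_0 |].
  apply ex_derive_upto_S with (fun y => Derive g y * Derive phi (g y)); [exact HU | |].
  - intros y Hy. apply (is_derive_comp phi g); eapply is_derive_of_upto; eauto.
  - apply ex_derive_upto_mult; [exact HU | apply ex_derive_upto_Derive; assumption |].
    apply (IH (Derive phi) g HgUV);
      auto using ex_derive_upto_pred, ex_derive_upto_Derive.
Qed.

Lemma ex_derive_upto_exp U m : open U -> ex_derive_upto U m exp.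
Proof.
  intros HU. induction m as [|m IH]; [apply ex_derive_upto_0 |].
  apply ex_derive_upto_S with exp; [exact HU | intros; apply is_derive_exp | exact IH].
Qed.

Lemma ex_derive_upto_inv m : ex_derive_upto (fun x => x <> 0) m Rinv.
Proof.
  assert (Hopen := open_neq 0).
  induction m as [|m IH]; [apply ex_derive_upto_0 |].
  apply ex_derive_upto_S with (fun y => - (/ y * / y)); [exact Hopen | |].
  - intros y Hy.
    replace (- (/ y * / y)) with (- 1 / y ^ 2) by (field; exact Hy).
    exact (is_derive_inv (fun x => x) y 1 (is_derive_id y) Hy).
  - apply ex_derive_upto_opp, ex_derive_upto_mult; assumption.
Qed.

Lemma ex_derive_upto_ln m : ex_derive_upto (fun x => 0 < x) m ln.
Proof.
  destruct m; [apply ex_derive_upto_0 |].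
  apply ex_derive_upto_S with Rinv; [apply open_gt | intros; apply is_derive_ln; assumption |].
  intros k Hk y Hy. apply (ex_derive_upto_inv m k Hk y), Rgt_not_eq, Hy.
Qed.

Lemma ex_derive_upto_Rpower m a : ex_derive_upto (fun x => 0 < x) m (fun x => Rpower x a).
Proof.
  apply (ex_derive_upto_comp _ (fun _ => True)); auto using open_gt, open_true, ex_derive_upto_exp.
  apply ex_derive_upto_mult; auto using open_gt, ex_derive_upto_const, ex_derive_upto_ln.
Qed.

Lemma ex_derive_upto_div (U : R -> Prop) m f g :
  open U -> (forall y, U y -> g y <> 0) ->
  ex_derive_upto U m f -> ex_derive_upto U m g -> ex_derive_upto U m (fun y => f y / g y).
Proof.
  intros HU Hg0 Hf Hg. apply ex_derive_upto_mult; [exact HU | exact Hf |].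
  apply (ex_derive_upto_comp U (fun x => x <> 0)); auto using open_neq, ex_derive_upto_inv.
Qed.

Lemma continuous_Rplus (f g : R -> R) x :
  continuous f x -> continuous g x -> continuous (fun y => f y + g y) x.
Proof. exact (continuous_plus f g x). Qed.

Lemma continuous_Rminus (f g : R -> R) x :
  continuous f x -> continuous g x -> continuous (fun y => f y - g y) x.
Proof. exact (continuous_minus f g x). Qed.

Lemma continuous_Rmult (f g : R -> R) x :
  continuous f x -> continuous g x -> continuous (fun y => f y * g y) x.
Proof. exact (continuous_mult f g x). Qed.

Lemma continuous_Rdiv (f g : R -> R) x :
  continuous f x -> continuous g x -> g x <> 0 -> continuous (fun y => f y / g y) x.
Proof.
  intros Hf Hg Hg0. apply continuous_Rmult; [exact Hf |].
  apply continuous_Rinv_comp; assumption.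
Qed.

Lemma Rmax_abs c y : Rmax c y = (c + y + Rabs (y - c)) / 2.
Proof.
  unfold Rmax. destruct (Rle_dec c y).
  - rewrite Rabs_right by lra. field.
  - rewrite Rabs_left by lra. field.
Qed.

Lemma continuous_Rmax_l c x : continuous (fun y => Rmax c y) x.
Proof.
  apply continuous_ext with (fun y => (c + y + Rabs (y - c)) / 2).
  - intros y. symmetry. apply Rmax_abs.
  - apply continuous_Rdiv; [| apply continuous_const | lra].
    apply continuous_Rplus;
      [apply continuous_Rplus; [apply continuous_const | apply continuous_id] |].
    apply (continuous_comp (fun y => y - c) Rabs), continuous_Rabs.
    apply continuous_Rminus; [apply continuous_id | apply continuous_const].
Qed.

Lemma Rpower_1_l a : Rpower 1 a = 1.
Proof. unfold Rpower. rewrite ln_1, Rmult_0_r. apply exp_0. Qed.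

Lemma Rpower_lt_1 x a : 0 < a -> 0 < x < 1 -> Rpower x a < 1.
Proof. intros Ha Hx. rewrite <- (Rpower_1_l a). apply Rlt_Rpower_l; assumption. Qed.

Lemma Rpower_succ x a : 0 < x -> Rpower x (1 + a) = x * Rpower x a.
Proof. intros Hx. rewrite Rpower_plus, Rpower_1 by exact Hx. reflexivity. Qed.

Lemma is_derive_Rpower x a : 0 < x -> is_derive (fun y => Rpower y a) x (a * Rpower x (a - 1)).
Proof. intros Hx. apply is_derive_Reals, derivable_pt_lim_power, Hx. Qed.

Lemma Derive_Rpower x a : 0 < x -> Derive (fun y => Rpower y a) x = a * Rpower x (a - 1).
Proof. intros Hx. apply is_derive_unique, is_derive_Rpower, Hx. Qed.

(* [Rpower 0 a = exp (a * ln 0) = 1] is a junk value; [rpow] replaces it by the limit 0. *)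
Definition rpow (x a : R) : R := if Rlt_dec 0 x then Rpower x a else 0.

Lemma rpow_pos x a : 0 < x -> rpow x a = Rpower x a.
Proof. intros Hx. unfold rpow. destruct (Rlt_dec 0 x); [reflexivity | lra]. Qed.

Lemma rpow_nonpos x a : x <= 0 -> rpow x a = 0.
Proof. intros Hx. unfold rpow. destruct (Rlt_dec 0 x); [lra | reflexivity]. Qed.

Lemma continuous_rpow_0 a : 0 < a -> continuous (fun y => rpow y a) 0.
Proof.
  intros Ha. apply continuity_pt_filterlim, continuity_pt_locally. intros eps.
  assert (Hd : 0 < Rpower eps (/ a)) by apply exp_pos.
  exists (mkposreal _ Hd). intros y Hy.
  change (Rabs (y - 0) < Rpower eps (/ a)) in Hy. rewrite Rminus_0_r in Hy.
  rewrite (rpow_nonpos 0), Rminus_0_r by lra.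
  destruct (Rlt_dec 0 y) as [Hy0 | Hy0].
  - rewrite rpow_pos, Rabs_right by (exact Hy0 || (left; apply exp_pos)).
    rewrite Rabs_right in Hy by lra.
    replace (pos eps) with (Rpower (Rpower eps (/ a)) a).
    + apply Rlt_Rpower_l; [exact Ha | split; assumption].
    + rewrite Rpower_mult, Rinv_l by lra. apply Rpower_1, cond_pos.
  - rewrite rpow_nonpos, Rabs_R0 by lra. apply cond_pos.
Qed.

Lemma continuous_rpow a x : 0 < a -> continuous (fun y => rpow y a) x.
Proof.
  intros Ha. destruct (Rtotal_order 0 x) as [Hx | [<- | Hx]].
  - apply continuous_ext_loc with (fun y => Rpower y a).
    + apply (filter_imp (fun y => 0 < y)); [| apply open_gt, Hx].
      intros y Hy. symmetry. apply rpow_pos, Hy.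
    + apply (ex_derive_continuous (fun y => Rpower y a)). eexists. apply is_derive_Rpower, Hx.
  - apply continuous_rpow_0, Ha.
  - apply continuous_ext_loc with (fun _ => 0); [| apply continuous_const].
    apply (filter_imp (fun y => y < 0)); [| apply open_lt, Hx].
    intros y Hy. symmetry. apply rpow_nonpos. lra.
Qed.

Lemma continuous_rpow_shift a c x : 0 < a -> continuous (fun y => rpow (y - c) a) x.
Proof.
  intros Ha. apply (continuous_comp (fun y => y - c) (fun z => rpow z a));
    [| apply continuous_rpow, Ha].
  apply continuous_Rminus; [apply continuous_id | apply continuous_const].
Qed.

Lemma incr_of_derive_pos (f df : R -> R) a :
  (forall x, a <= x -> continuous f x) ->
  (forall x, a < x -> is_derive f x (df x)) ->
  (forall x, a < x -> 0 < df x) ->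
  forall x y, a <= x -> x < y -> f x < f y.
Proof.
  intros Hcont Hder Hpos x y Hx Hxy.
  (* the MVT point may be the endpoint [a], where [df] carries no information *)
  set (df' := fun c => if Rlt_dec a c then df c else 1).
  destruct (MVT_gen f x y df') as [c [Hc Hfxy]].
  - intros c Hc. rewrite Rmin_left, Rmax_right in Hc by lra.
    unfold df'. destruct (Rlt_dec a c); [apply Hder; lra | lra].
  - intros c Hc. rewrite Rmin_left, Rmax_right in Hc by lra.
    apply continuity_pt_filterlim, Hcont. lra.
  - assert (0 < df' c) by (unfold df'; destruct (Rlt_dec a c); [apply Hpos |]; lra).
    nra.
Qed.

Lemma is_derive_cosh x : is_derive cosh x (sinh x).
Proof. apply is_derive_Reals, derivable_pt_lim_cosh. Qed.

Lemma cosh_lt x y : 0 <= x -> x < y -> cosh x < cosh y.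
Proof.
  apply (incr_of_derive_pos cosh sinh 0).
  - intros z _. apply (ex_derive_continuous cosh). eexists. apply is_derive_cosh.
  - intros z _. apply is_derive_cosh.
  - intros z Hz. rewrite <- sinh_0. apply sinh_lt, Hz.
Qed.

Lemma sinh_scale_gt p t : 1 < p -> 0 < t -> p * sinh t < sinh (p * t).
Proof.
  intros Hp Ht.
  set (h := fun s => sinh (p * s) - p * sinh s).
  assert (Hh : forall s, is_derive h s (p * (cosh (p * s) - cosh s))).
  { intros s. unfold h, sinh, cosh. auto_derive; [exact I | field]. }
  assert (Hlt : h 0 < h t).
  { apply (incr_of_derive_pos h (fun s => p * (cosh (p * s) - cosh s)) 0); try lra.
    - intros x _. apply (ex_derive_continuous h). eexists. apply Hh.
    - intros x _. apply Hh.
    - intros x Hx. apply Rmult_lt_0_compat; [lra |].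
      apply Rlt_0_minus, cosh_lt; [lra | nra]. }
  unfold h in Hlt. rewrite Rmult_0_r, sinh_0 in Hlt. lra.
Qed.

Lemma Rpower_sub_gt p u v : 1 < p -> 0 < v < u ->
  p * (u - v) * Rpower (u * v) ((p - 1) / 2) < Rpower u p - Rpower v p.
Proof.
  intros Hp [Hv Hvu].
  set (m := (ln u + ln v) / 2). set (t := (ln u - ln v) / 2).
  assert (Ht : 0 < t) by (assert (ln v < ln u) by (apply ln_increasing; lra); unfold t; lra).
  assert (Eu : ln u = m + t) by (unfold m, t; field).
  assert (Ev : ln v = m - t) by (unfold m, t; field).
  assert (Esub : forall r, exp (r * (m + t)) - exp (r * (m - t)) = 2 * exp (r * m) * sinh (r * t)).
  { intros r. unfold sinh.
    replace (r * (m - t)) with (r * m + - (r * t)) by ring.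
    rewrite Rmult_plus_distr_l, !exp_plus. field. }
  assert (Euv : u - v = 2 * exp m * sinh t).
  { rewrite <- (exp_ln u), <- (exp_ln v), Eu, Ev by lra.
    specialize (Esub 1). rewrite !Rmult_1_l in Esub. exact Esub. }
  unfold Rpower. rewrite ln_mult, Eu, Ev, Esub, Euv by lra.
  replace ((p - 1) / 2 * (m + t + (m - t))) with ((p - 1) * m) by field.
  replace (exp (p * m)) with (exp m * exp ((p - 1) * m)) by (rewrite <- exp_plus; f_equal; ring).
  assert (H := sinh_scale_gt p t Hp Ht).
  assert (0 < exp m * exp ((p - 1) * m)) by (apply Rmult_lt_0_compat; apply exp_pos).
  nra.
Qed.

Section IncreasingToLimit.

Variables (f : R -> R) (a m l : R).
Hypothesis f_cont : forall x, continuous f x.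
Hypothesis f_start : f a = m.
Hypothesis f_incr : forall x y, a <= x -> x < y -> f x < f y.
Hypothesis f_lim : forall eps, 0 < eps -> exists M, forall y, M < y -> Rabs (f y - l) < eps.

Lemma incr_le x y : a <= x -> x <= y -> f x <= f y.
Proof. intros Hx Hxy. destruct (Rle_lt_or_eq_dec x y Hxy) as [H | <-]; [left; auto | lra]. Qed.

Lemma incr_range y : a <= y -> m <= f y < l.
Proof.
  intros Hy. split; [rewrite <- f_start; apply incr_le; lra |].
  apply Rlt_le_trans with (f (y + 1)); [apply f_incr; lra |].
  apply Rnot_lt_le. intros Hl.
  destruct (f_lim (f (y + 1) - l)) as [M HM]; [lra |].
  set (w := Rmax M (y + 1) + 1).
  assert (Hw : y + 1 < w) by (unfold w; generalize (Rmax_r M (y + 1)); lra).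
  specialize (HM w ltac:(unfold w; generalize (Rmax_l M (y + 1)); lra)).
  generalize (f_incr (y + 1) w ltac:(lra) Hw). apply Rabs_def2 in HM. lra.
Qed.

Lemma incr_inj x y : a <= x -> a <= y -> f x = f y -> x = y.
Proof.
  intros Hx Hy Hxy. destruct (Rtotal_order x y) as [H | [H | H]]; auto.
  - generalize (f_incr x y Hx H). lra.
  - generalize (f_incr y x Hy H). lra.
Qed.

Lemma incr_onto z : m <= z < l -> exists y, a <= y /\ f y = z.
Proof.
  intros Hz. destruct (f_lim (l - z)) as [M HM]; [lra |].
  set (w := Rmax a M + 1).
  specialize (HM w ltac:(unfold w; generalize (Rmax_r a M); lra)). apply Rabs_def2 in HM.
  assert (Haw : a <= w) by (unfold w; generalize (Rmax_l a M); lra).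
  destruct (IVT_gen f a w z) as [y [Hy Hfy]].
  - intros x. apply continuity_pt_filterlim, f_cont.
  - rewrite Rmin_left, Rmax_right; lra.
  - exists y. rewrite Rmin_left in Hy by exact Haw. split; [lra | exact Hfy].
Qed.

Lemma incr_section : exists g : R -> R, forall z, m <= z < l -> a <= g z /\ f (g z) = z.
Proof.
  assert (Hex : forall z, exists y, m <= z < l -> a <= y /\ f y = z).
  { intros z. destruct (classic (m <= z < l)) as [Hz | Hz].
    - destruct (incr_onto z Hz) as [y Hy]. exists y. auto.
    - exists a. intros; contradiction. }
  exists (fun z => proj1_sig (constructive_indefinite_description _ (Hex z))).
  intros z. exact (proj2_sig (constructive_indefinite_description _ (Hex z))).
Qed.

Section Inverse.

Variable g : R -> R.
Hypothesis g_section : forall z, m <= z < l -> a <= g z /\ f (g z) = z.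

Lemma section_retraction y : a <= y -> g (f y) = y.
Proof.
  intros Hy. destruct (g_section (f y) (incr_range y Hy)) as [Hg Hfg].
  apply incr_inj; assumption.
Qed.

Lemma section_incr z w : m <= z -> z < w -> w < l -> g z < g w.
Proof.
  intros Hmz Hzw Hwl.
  destruct (g_section z ltac:(lra)) as [Hz Hfz]. destruct (g_section w ltac:(lra)) as [Hw Hfw].
  apply Rnot_le_lt. intros Hle. generalize (incr_le (g w) (g z) Hw Hle). lra.
Qed.

Lemma section_upper z eps : m <= z < l -> 0 < eps ->
  exists d, 0 < d /\ forall w, m <= w < l -> w < z + d -> g w < g z + eps.
Proof.
  intros Hz Heps. destruct (g_section z Hz) as [Hgz Hfgz].
  exists (f (g z + eps) - z). split.
  - rewrite <- Hfgz at 2. generalize (f_incr (g z) (g z + eps) Hgz ltac:(lra)). lra.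
  - intros w Hw Hwd. destruct (g_section w Hw) as [Hgw Hfgw].
    apply Rnot_le_lt. intros Hle. generalize (incr_le (g z + eps) (g w) ltac:(lra) Hle). lra.
Qed.

Lemma section_lower z eps : m <= z < l -> 0 < eps ->
  exists d, 0 < d /\ forall w, m <= w < l -> z - d < w -> g z - eps < g w.
Proof.
  intros Hz Heps. destruct (g_section z Hz) as [Hgz Hfgz].
  destruct (Rlt_le_dec (g z - eps) a) as [Ha | Ha].
  - exists 1. split; [lra |]. intros w Hw _. destruct (g_section w Hw). lra.
  - exists (z - f (g z - eps)). split.
    + rewrite <- Hfgz at 1. generalize (f_incr (g z - eps) (g z) Ha ltac:(lra)). lra.
    + intros w Hw Hwd. destruct (g_section w Hw) as [Hgw Hfgw].
      apply Rnot_le_lt. intros Hle. generalize (incr_le _ _ Hgw Hle). lra.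
Qed.

Lemma section_continuous z : m <= z < l ->
  filterlim g (within (fun x => m <= x < l) (locally z)) (locally (g z)).
Proof.
  intros Hz P [eps HP].
  destruct (section_upper z eps Hz (cond_pos eps)) as [d1 [Hd1 Hup]].
  destruct (section_lower z eps Hz (cond_pos eps)) as [d2 [Hd2 Hlow]].
  assert (Hd : 0 < Rmin d1 d2) by (apply Rmin_glb_lt; assumption).
  exists (mkposreal _ Hd). intros w Hw Hwdom. apply HP.
  change (Rabs (w - z) < Rmin d1 d2) in Hw. apply Rabs_def2 in Hw.
  generalize (Rmin_l d1 d2) (Rmin_r d1 d2). intros.
  change (Rabs (g w - g z) < eps).
  apply Rabs_def1;
    [generalize (Hup w Hwdom ltac:(lra)) | generalize (Hlow w Hwdom ltac:(lra))]; lra.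
Qed.

End Inverse.

Lemma incr_inverse : exists g : R -> R,
  (forall z, m <= z < l -> a <= g z /\ f (g z) = z)
  /\ (forall y, a <= y -> g (f y) = y)
  /\ (forall z w, m <= z -> z < w -> w < l -> g z < g w)
  /\ (forall z, m <= z < l ->
        filterlim g (within (fun x => m <= x < l) (locally z)) (locally (g z))).
Proof.
  destruct incr_section as [g Hg]. exists g.
  repeat split; intros; try apply Hg;
    auto using section_retraction, section_incr, section_continuous.
Qed.

End IncreasingToLimit.

(* The expressions of [fq] and of its derivative, parameterized by the power function:
   [Rpower] gives the smooth branch on (1, +oo), [rpow] a version continuous on [1, +oo). *)
Definition fq_expr (pw : R -> R -> R) (q y : R) : R :=
  - q * (pw y (q / (q - 1)) / (pw y (q / (q - 1)) - pw (y - 1) (q / (q - 1)))) + (q - 1) * y.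

Definition fq_deriv_expr (pw : R -> R -> R) (q y : R) : R :=
  ((q - 1) ^ 2 * (pw y (q / (q - 1)) - pw (y - 1) (q / (q - 1))) ^ 2
     - q ^ 2 * pw y (1 / (q - 1)) * pw (y - 1) (1 / (q - 1)))
  / ((q - 1) * (pw y (q / (q - 1)) - pw (y - 1) (q / (q - 1))) ^ 2).

Section Fq.

Variable q : R.
Hypothesis hq : 1 < q.

Local Notation p := (q / (q - 1)).

Lemma conj_exponent_gt1 : 1 < p.
Proof. apply (Rmult_lt_reg_r (q - 1)); [lra |]. unfold Rdiv. rewrite Rmult_assoc, Rinv_l; lra. Qed.

Lemma conj_exponent_eq : p = 1 + 1 / (q - 1).
Proof. field. lra. Qed.

Lemma fq_le1 y : y <= 1 -> fq q y = -1.
Proof. intros Hy. unfold fq. destruct (Rle_dec y 1); [reflexivity | lra]. Qed.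

Lemma fq_gt1 y : 1 < y -> fq q y = fq_expr Rpower q y.
Proof. intros Hy. unfold fq. destruct (Rle_dec y 1); [lra | reflexivity]. Qed.

Lemma Rpower_diff_pos y : 1 < y -> 0 < Rpower y p - Rpower (y - 1) p.
Proof. intros Hy. apply Rlt_0_minus, Rlt_Rpower_l; [generalize conj_exponent_gt1 |]; lra. Qed.

Lemma rpow_diff_pos y : 1 <= y -> 0 < rpow y p - rpow (y - 1) p.
Proof.
  intros Hy. destruct (Rle_lt_or_eq_dec 1 y Hy) as [Hy1 | <-].
  - rewrite !rpow_pos by lra. apply Rpower_diff_pos, Hy1.
  - rewrite rpow_pos, rpow_nonpos, Rpower_1_l by lra. lra.
Qed.

Lemma fq_smooth y n : 1 < y -> ex_derive_n (fq q) n y.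
Proof.
  intros Hy. set (U := fun y : R => 1 < y). assert (HU : open U) by apply open_gt.
  assert (Hpow0 : ex_derive_upto U n (fun y => Rpower y p)).
  { apply (ex_derive_upto_comp U (fun x => 0 < x) n (fun x => Rpower x p) (fun y => y));
      auto using open_gt, ex_derive_upto_Rpower, ex_derive_upto_id.
    unfold U. intros y' Hy'. lra. }
  assert (Hpow1 : ex_derive_upto U n (fun y => Rpower (y - 1) p)).
  { apply (ex_derive_upto_comp U (fun x => 0 < x) n (fun x => Rpower x p) (fun y => y - 1));
      auto using open_gt, ex_derive_upto_Rpower, ex_derive_upto_minus, ex_derive_upto_id,
        ex_derive_upto_const.
    unfold U. intros y' Hy'. lra. }
  assert (Hexpr : ex_derive_upto U n (fq_expr Rpower q)).
  { unfold fq_expr. apply ex_derive_upto_plus; [exact HU | |].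
    - apply ex_derive_upto_mult; [exact HU | apply ex_derive_upto_const, HU |].
      apply ex_derive_upto_div; [exact HU | | exact Hpow0 |].
      + intros y' Hy'. apply Rgt_not_eq, Rpower_diff_pos, Hy'.
      + apply ex_derive_upto_minus; assumption.
    - apply (ex_derive_upto_mult U HU n (fun _ => q - 1) (fun y => y)).
      + apply ex_derive_upto_const, HU.
      + apply ex_derive_upto_id, HU. }
  apply (ex_derive_upto_ext U HU n _ (fq q)) in Hexpr.
  - apply (Hexpr n (le_n n) y Hy).
  - intros y' Hy'. symmetry. apply fq_gt1, Hy'.
Qed.

Lemma fq_expr_derive y : 1 < y -> is_derive (fq_expr Rpower q) y (fq_deriv_formula q y).
Proof.
  intros Hy. assert (HD := Rpower_diff_pos y Hy). unfold fq_expr.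
  auto_derive; replace (y + - (1)) with (y - 1) by ring.
  - repeat split; try lra; eexists; apply is_derive_Rpower; lra.
  - rewrite !Derive_Rpower by lra.
    unfold fq_deriv_formula. revert HD. rewrite conj_exponent_eq.
    replace (1 + 1 / (q - 1) - 1) with (1 / (q - 1)) by ring.
    rewrite !Rpower_succ by lra. intros HD.
    field. split; lra.
Qed.

Lemma fq_derive y : 1 < y -> is_derive (fq q) y (fq_deriv_formula q y).
Proof.
  intros Hy. apply is_derive_ext_loc with (fq_expr Rpower q); [| apply fq_expr_derive, Hy].
  apply (filter_imp (fun y => 1 < y)); [| apply open_gt, Hy].
  intros y' Hy'. symmetry. apply fq_gt1, Hy'.
Qed.

Lemma fq_deriv_formula_pos y : 1 < y -> 0 < fq_deriv_formula q y.
Proof.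
  intros Hy. assert (HD := Rpower_diff_pos y Hy).
  set (D := Rpower y p - Rpower (y - 1) p) in *.
  set (G := Rpower (y * (y - 1)) ((p - 1) / 2)).
  assert (HG : 0 < G) by apply exp_pos.
  assert (HGD : q * G < (q - 1) * D).
  { generalize (Rpower_sub_gt p y (y - 1) conj_exponent_gt1 ltac:(lra)). fold G D.
    replace (y - (y - 1)) with 1 by ring. intros H.
    replace (q * G) with ((q - 1) * (p * 1 * G)) by (field; lra).
    apply Rmult_lt_compat_l; lra. }
  assert (HGG : Rpower y (1 / (q - 1)) * Rpower (y - 1) (1 / (q - 1)) = G * G).
  { unfold G. rewrite <- Rpower_plus.
    replace ((p - 1) / 2 + (p - 1) / 2) with (1 / (q - 1)) by (field; lra).
    apply Rpower_mult_distr; lra. }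
  unfold fq_deriv_formula. fold D.
  replace (q ^ 2 * Rpower y (1 / (q - 1)) * Rpower (y - 1) (1 / (q - 1)))
    with (q ^ 2 * (G * G)) by (rewrite <- HGG; ring).
  apply Rdiv_lt_0_compat.
  - assert (0 < ((q - 1) * D - q * G) * ((q - 1) * D + q * G)) by (apply Rmult_lt_0_compat; nra).
    nra.
  - apply Rmult_lt_0_compat; [lra | apply pow_lt, HD].
Qed.

Lemma fq_Rmax y : fq q y = fq_expr rpow q (Rmax 1 y).
Proof.
  unfold Rmax. destruct (Rle_dec 1 y) as [Hy | Hy].
  - destruct (Rle_lt_or_eq_dec 1 y Hy) as [Hy1 | <-].
    + rewrite fq_gt1 by exact Hy1. unfold fq_expr. rewrite !rpow_pos by lra. reflexivity.
    + rewrite fq_le1 by lra. unfold fq_expr. rewrite rpow_pos, rpow_nonpos, Rpower_1_l by lra.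
      replace (1 - 0) with 1 by ring. field.
  - rewrite fq_le1 by lra. unfold fq_expr. rewrite rpow_pos, rpow_nonpos, Rpower_1_l by lra.
    replace (1 - 0) with 1 by ring. field.
Qed.

Lemma fq_expr_rpow_continuous y : 1 <= y -> continuous (fq_expr rpow q) y.
Proof.
  intros Hy. assert (Hp := conj_exponent_gt1). unfold fq_expr.
  apply continuous_Rplus.
  - apply continuous_Rmult; [apply continuous_const |].
    apply continuous_Rdiv; [apply continuous_rpow; lra | |].
    + apply continuous_Rminus; [apply continuous_rpow | apply continuous_rpow_shift]; lra.
    + apply Rgt_not_eq, rpow_diff_pos, Hy.
  - apply continuous_Rmult; [apply continuous_const | apply continuous_id].
Qed.

Lemma fq_continuous y : continuous (fq q) y.
Proof.
  apply continuous_ext with (fun y => fq_expr rpow q (Rmax 1 y)).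
  { intros y'. symmetry. apply fq_Rmax. }
  apply (continuous_comp (fun y => Rmax 1 y) (fq_expr rpow q)); [apply continuous_Rmax_l |].
  apply fq_expr_rpow_continuous, Rmax_l.
Qed.

Lemma fq_incr x y : 1 <= x -> x < y -> fq q x < fq q y.
Proof.
  apply (incr_of_derive_pos (fq q) (fq_deriv_formula q) 1).
  - intros z _. apply fq_continuous.
  - apply fq_derive.
  - apply fq_deriv_formula_pos.
Qed.

Lemma fq_deriv_ext_eq y : 1 <= y -> fq_deriv_ext q y = fq_deriv_expr rpow q y.
Proof.
  intros Hy. unfold fq_deriv_ext. destruct (Rlt_dec 1 y) as [Hy1 | Hy1].
  - rewrite (is_derive_unique _ _ _ (fq_derive y Hy1)).
    unfold fq_deriv_formula, fq_deriv_expr. rewrite !rpow_pos by lra. reflexivity.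
  - replace y with 1 by lra. unfold fq_deriv_expr.
    rewrite !(rpow_pos 1), !(rpow_nonpos (1 - 1)), !Rpower_1_l by lra. field. lra.
Qed.

Lemma fq_deriv_expr_rpow_continuous y : 1 <= y -> continuous (fq_deriv_expr rpow q) y.
Proof.
  intros Hy. assert (Hp := conj_exponent_gt1).
  assert (Ha : 0 < 1 / (q - 1)) by (apply Rdiv_lt_0_compat; lra).
  assert (HD : continuous (fun y => (rpow y p - rpow (y - 1) p) ^ 2) y).
  { apply (continuous_comp (fun y => rpow y p - rpow (y - 1) p) (fun x => x ^ 2)).
    - apply continuous_Rminus; [apply continuous_rpow | apply continuous_rpow_shift]; lra.
    - apply (ex_derive_continuous (fun x => x ^ 2)). auto_derive. exact I. }
  unfold fq_deriv_expr. apply continuous_Rdiv.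
  - apply continuous_Rminus; apply continuous_Rmult.
    + apply continuous_const.
    + exact HD.
    + apply continuous_Rmult; [apply continuous_const | apply continuous_rpow, Ha].
    + apply continuous_rpow_shift, Ha.
  - apply continuous_Rmult; [apply continuous_const | exact HD].
  - assert (H := rpow_diff_pos y Hy). apply Rmult_integral_contrapositive.
    split; [lra | apply pow_nonzero; lra].
Qed.

Lemma fq_deriv_ext_continuous y : 1 <= y ->
  filterlim (fq_deriv_ext q) (within (fun x => 1 <= x) (locally y)) (locally (fq_deriv_ext q y)).
Proof.
  intros Hy. rewrite fq_deriv_ext_eq by exact Hy.
  apply filterlim_within_ext with (fq_deriv_expr rpow q).
  - intros x Hx. symmetry. apply fq_deriv_ext_eq, Hx.
  - eapply filterlim_filter_le_1; [apply filter_le_within |].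
    apply fq_deriv_expr_rpow_continuous, Hy.
Qed.

Let E s := 1 - Rpower (1 - s) p.
Let K s := (q - 1 + s / 2) * E s - q * s.
Let K' s := E s / 2 + (q - 1 + s / 2) * (p * Rpower (1 - s) (p - 1)) - q.

Lemma fq_add_half y : 1 < y -> fq q y + 1 / 2 = K (/ y) / (/ y * E (/ y)).
Proof.
  intros Hy. rewrite fq_gt1 by exact Hy. unfold fq_expr, K, E.
  replace (Rpower (y - 1) p) with (Rpower y p * Rpower (1 - / y) p).
  - assert (0 < Rpower y p) by apply exp_pos.
    assert (Rpower (1 - / y) p < 1).
    { apply Rpower_lt_1; [generalize conj_exponent_gt1; lra |].
      split; [| assert (0 < / y) by (apply Rinv_0_lt_compat; lra); lra].
      apply Rlt_0_minus. rewrite <- Rinv_1. apply Rinv_lt_contravar; lra. }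
    field. repeat split; nra.
  - rewrite Rpower_mult_distr; [f_equal; field; lra | lra |].
    apply Rlt_0_minus. rewrite <- Rinv_1. apply Rinv_lt_contravar; lra.
Qed.

Lemma E_gt s : 0 < s < 1 -> s < E s.
Proof.
  intros Hs. unfold E.
  replace (Rpower (1 - s) p) with ((1 - s) * Rpower (1 - s) (p - 1)).
  - assert (Rpower (1 - s) (p - 1) < 1) by (apply Rpower_lt_1; generalize conj_exponent_gt1; lra).
    nra.
  - rewrite <- Rpower_succ by lra. f_equal. ring.
Qed.

Lemma K_derive s : s < 1 -> is_derive K s (K' s).
Proof.
  intros Hs. unfold K, K', E. auto_derive; replace (1 + - s) with (1 - s) by ring.
  - repeat split. eexists. apply is_derive_Rpower. lra.
  - rewrite Derive_Rpower by lra. field. lra.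
Qed.

Lemma K'_derive_0 : is_derive K' 0 0.
Proof.
  unfold K', E. auto_derive; replace (1 + - 0) with 1 by ring.
  - repeat split; eexists; apply is_derive_Rpower; lra.
  - rewrite !Derive_Rpower, !Rpower_1_l by lra. field. lra.
Qed.

Lemma K_0 : K 0 = 0.
Proof. unfold K, E. rewrite Rminus_0_r, Rpower_1_l. ring. Qed.

Lemma K'_0 : K' 0 = 0.
Proof. unfold K', E. rewrite Rminus_0_r, !Rpower_1_l. field. lra. Qed.

Lemma K_small eps : 0 < eps ->
  exists d, 0 < d /\ forall s, 0 < s < 1 -> s < d -> Rabs (K s) <= eps * s ^ 2.
Proof.
  intros Heps. destruct (proj1 (is_derive_Reals K' 0 0) K'_derive_0 eps Heps) as [d Hd].
  exists d. split; [apply cond_pos |]. intros s Hs Hsd.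
  destruct (MVT_cor2 K K' 0 s (proj1 Hs)) as [c [Hmvt Hc]].
  { intros c Hc. apply is_derive_Reals, K_derive. lra. }
  assert (HK'c : Rabs (K' c) < eps * c).
  { specialize (Hd c ltac:(lra) ltac:(rewrite Rabs_right; lra)).
    rewrite Rplus_0_l, K'_0, !Rminus_0_r, Rabs_div, (Rabs_right c) in Hd by lra.
    apply Rmult_lt_reg_r with (/ c); [apply Rinv_0_lt_compat; lra |].
    rewrite Rmult_assoc, Rinv_r, Rmult_1_r by lra. exact Hd. }
  rewrite K_0, !Rminus_0_r in Hmvt. rewrite Hmvt, Rabs_mult, (Rabs_right s) by lra.
  assert (Rabs (K' c) * s <= eps * c * s) by (apply Rmult_le_compat_r; lra).
  assert (eps * c * s <= eps * s * s)
    by (apply Rmult_le_compat_r; [lra | apply Rmult_le_compat_l; lra]).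
  simpl. lra.
Qed.

Lemma fq_tends_to_half eps : 0 < eps ->
  exists M, forall y, M < y -> Rabs (fq q y - (-1/2)) < eps.
Proof.
  intros Heps. destruct (K_small eps Heps) as [d [Hd HK]].
  exists (Rmax 1 (/ d)). intros y Hy.
  assert (Hy1 : 1 < y) by (generalize (Rmax_l 1 (/ d)); lra).
  assert (Hs : 0 < / y < 1).
  { split; [apply Rinv_0_lt_compat; lra | rewrite <- Rinv_1; apply Rinv_lt_contravar; lra]. }
  assert (Hsd : / y < d).
  { rewrite <- (Rinv_inv d). apply Rinv_lt_contravar; [| generalize (Rmax_r 1 (/ d)); lra].
    apply Rmult_lt_0_compat; [apply Rinv_0_lt_compat |]; lra. }
  replace (fq q y - (-1/2)) with (fq q y + 1 / 2) by field.
  rewrite fq_add_half by exact Hy1.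
  specialize (HK (/ y) Hs Hsd). assert (HE := E_gt (/ y) Hs).
  set (s := / y) in *.
  rewrite Rabs_div, (Rabs_right (s * E s)) by nra.
  apply Rle_lt_trans with (eps * s ^ 2 / (s * E s)).
  - apply Rmult_le_compat_r; [left; apply Rinv_0_lt_compat; nra | exact HK].
  - apply Rmult_lt_reg_r with (s * E s); [nra |].
    unfold Rdiv. rewrite Rmult_assoc, Rinv_l by nra.
    assert (0 < eps * s * (E s - s)) by (apply Rmult_lt_0_compat; [apply Rmult_lt_0_compat |]; lra).
    nra.
Qed.

End Fq.

Theorem lemmaA1 (q : R) (hq : 1 < q) :
  (* 1. continuity of f on [1,+oo) *)
  (forall y, 1 <= y ->
     filterlim (fq q) (within (fun x => 1 <= x) (locally y)) (locally (fq q y)))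
  (* f is (strictly) increasing on [1,+oo) *)
  /\ (forall x y, 1 <= x -> x < y -> fq q x < fq q y)
  (* f is smooth on (1,+oo): derivatives of every order exist *)
  /\ (forall y, 1 < y -> forall n : nat, ex_derive_n (fq q) n y)
  (* f is a bijection from [1,+oo) onto [-1,-1/2) *)
  /\ (forall y, 1 <= y -> -1 <= fq q y < -1/2)
  /\ (forall x y, 1 <= x -> 1 <= y -> fq q x = fq q y -> x = y)
  /\ (forall z, -1 <= z < -1/2 -> exists y, 1 <= y /\ fq q y = z)
  (* with an increasing and continuous inverse *)
  /\ (exists g : R -> R,
        (forall z, -1 <= z < -1/2 -> 1 <= g z /\ fq q (g z) = z)
        /\ (forall y, 1 <= y -> g (fq q y) = y)
        /\ (forall z w, -1 <= z -> z < w -> w < -1/2 -> g z < g w)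
        /\ (forall z, -1 <= z < -1/2 ->
              filterlim g (within (fun x => -1 <= x < -1/2) (locally z))
                (locally (g z))))
  (* 2. derivative formula on (1,+oo) *)
  /\ (forall y, 1 < y -> is_derive (fq q) y (fq_deriv_formula q y))
  (* the extension of f' by q-1 at 1 is continuous on [1,+oo) *)
  /\ (forall y, 1 <= y ->
        filterlim (fq_deriv_ext q) (within (fun x => 1 <= x) (locally y))
          (locally (fq_deriv_ext q y))).
Proof.
  assert (Hcont := fq_continuous q hq).
  assert (Hincr := fq_incr q hq).
  assert (Hstart : fq q 1 = -1) by (apply fq_le1; lra).
  assert (Hlim := fq_tends_to_half q hq).
  split; [| split; [| split; [| split; [| split; [| split; [| split; [| split]]]]]]].
  - intros y _. eapply filterlim_filter_le_1; [apply filter_le_within | apply Hcont].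
  - exact Hincr.
  - intros y Hy n. apply fq_smooth; assumption.
  - intros y Hy. apply (incr_range (fq q) 1); assumption.
  - apply (incr_inj (fq q) 1); assumption.
  - apply (incr_onto (fq q) 1); assumption.
  - apply (incr_inverse (fq q) 1); assumption.
  - apply fq_derive, hq.
  - apply fq_deriv_ext_continuous, hq.
Qed.
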